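(* Let $d\geq 1$ and for $i=2,\ldots,d+1$ let $\sigma_i\in\Sigma_{d+1}$ be the transposition $(1\ i)$. Let $0<a_1<\cdots<a_d$ be integers forming a progression-free sequence, and let $m_d>4a_d$ be an integer. Consider the group $\Gamma_d=\Sigma_{d+1}\oplus\mathbb{Z}/m_d$ and its elements $\gamma_i=(\sigma_{i+1},a_i)$ for $i=1,\ldots,d$. Then $(\Gamma_d,\{\gamma_1,\ldots,\gamma_d\})$ satisfies condition $\mathcal{G}(4)$.
   Context: $\Sigma_{d+1}$ is the symmetric group on $\{1,\ldots,d+1\}$. A sequence $a_1<\cdots<a_d$ of integers is progression-free if $a_i+a_j=2a_k$ with $1\leq i,j,k\leq d$ implies $i=j=k$. For a finite group $\Gamma$ with identity $e$ and $D=\{\gamma_1,\ldots,\gamma_d\}\subseteq\Gamma$, and $p\geq 1$, the pair $(\Gamma,D)$ satisfies $\mathcal{R}(p)$ if for every sequence of indices $i_0,\ldots,i_{2p-1}\in\{1,\ldots,d\}$ the equality $\gamma_{i_0}\gamma_{i_1}^{-1}\gamma_{i_2}\gamma_{i_3}^{-1}\cdots\gamma_{i_{2p-2}}\gamma_{i_{2p-1}}^{-1}=e$ implies $i_l=i_{l+1}$ for some $l\in\{0,\ldots,2p-1\}$ (indices modulo $2p$); it satisfies $\mathcal{G}(p)$ if it satisfies $\mathcal{R}(1),\ldots,\mathcal{R}(p)$. *)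

From mathcomp Require Import all_boot all_order all_algebra all_fingroup.
Set Implicit Arguments. Unset Strict Implicit. Unset Printing Implicit Defensive.

Local Open Scope group_scope.

(* Condition R(p) for a finite group gT and an indexed family
   gam : 'I_d -> gT (gam i = gamma_{i+1}).  Indices are 0-based;
   the cyclic successor of l in 'I_(2p) is ordS l (= (l+1) mod 2p). *)
Definition condR (gT : finGroupType) (d : nat) (gam : 'I_d -> gT) (p : nat) : Prop :=
  forall idx : 'I_(p.*2) -> 'I_d,
    \prod_(l < p.*2) (if odd l then (gam (idx l))^-1 else gam (idx l)) = 1 ->
    exists l : 'I_(p.*2), idx l = idx (ordS l).

Definition condG (gT : finGroupType) (d : nat) (gam : 'I_d -> gT) (p : nat) : Prop :=
  forall q, (1 <= q <= p)%N -> condR gam q.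

Definition progression_free (d : nat) (a : nat -> nat) : Prop :=
  forall i j k, 1 <= i <= d -> 1 <= j <= d -> 1 <= k <= d ->
    (a i + a j = 2 * a k)%N -> i = j /\ j = k.

(* sigma_{i+2} = transposition (1 i+2) in Sigma_{d+1} (0-based: swaps 0 and i+1). *)
Definition sigma (d : nat) (i : 'I_d) : 'S_d.+1 := tperm ord0 (lift ord0 i).

(* gamma_{i+1} = (sigma_{i+2}, a_{i+1}) in Sigma_{d+1} x Z/m *)
Definition gamma (d m : nat) (a : nat -> nat) (i : 'I_d) : ('S_d.+1 * 'Z_m)%type :=
  (sigma i, inZp (a i.+1)).

From mathcomp Require Import all_boot all_order all_algebra all_fingroup.
From mathcomp Require Import zify.
Set Implicit Arguments. Unset Strict Implicit. Unset Printing Implicit Defensive.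

Import GRing.Theory.

(* A relator of length 2q <= 8 whose consecutive indices are cyclically distinct projects
   to a trivial word in the transpositions (1 i) of Sigma_(d+1), and to an equality in Z/m
   between the sums of the a_i over its even and over its odd positions; both sums are at most
   4 a_d < m, so they are equal as integers.  Relabelling letters by first occurrence leaves
   finitely many such words, and a computation finds for each of them s, t > 0 and letters
   i != k such that s copies of the even letters plus 2t copies of k form the same multiset as
   s copies of the odd letters plus t copies each of i and j (or the same with even and odd
   exchanged).  The equality of sums then gives a_i + a_j = 2 a_k, which progression-freeness
   forbids. *)

Fixpoint evens (T : Type) (w : seq T) : seq T :=
  if w is x :: y :: w' then x :: evens w' else w.

Definition odds (T : Type) (w : seq T) : seq T := evens (behead w).

Lemma evens_cons (T : Type) (x : T) w : evens (x :: w) = x :: odds w.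
Proof. by case: w. Qed.

Lemma map_evens_odds (T U : Type) (f : T -> U) w :
  map f (evens w) = evens (map f w) /\ map f (odds w) = odds (map f w).
Proof.
elim: w => [|x w [IHe IHo]] //.
by split; [rewrite !evens_cons /= IHo | rewrite /odds /= IHe].
Qed.

Lemma size_evens_odds (T : Type) (w : seq T) :
  size (evens w) = uphalf (size w) /\ size (odds w) = (size w)./2.
Proof. by elim: w => [|x w [IHe IHo]] //; rewrite evens_cons /odds /= IHe IHo. Qed.

Lemma subseq_evens_odds (T : eqType) (w : seq T) : subseq (evens w) w /\ subseq (odds w) w.
Proof.
elim: w => [|x w [IHe IHo]] //; rewrite evens_cons /odds /= eqxx IHo.
by split=> //; apply: subseq_trans IHe (subseq_cons w x).
Qed.

Lemma sum_evens_odds (b : nat -> nat) n w : size w = n ->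
  \sum_(l < n | ~~ odd l) b (nth 0 w l) = sumn (map b (evens w)) /\
  \sum_(l < n | odd l) b (nth 0 w l) = sumn (map b (odds w)).
Proof.
move=> <-; elim: w => [|x w [IHe IHo]]; first by rewrite !big_ord0.
rewrite evens_cons /odds /= -IHe -IHo.
split; rewrite big_mkcond big_ord_recl /= ?add0n [in RHS]big_mkcond; [congr (_ + _)|];
  by apply: eq_bigr => l _; rewrite add0n ?negbK.
Qed.

Lemma sumn_map_le (f : nat -> nat) s M :
  {in s, forall x, f x <= M} -> sumn (map f s) <= size s * M.
Proof.
elim: s => //= x s IH fM; rewrite mulSn leq_add ?fM ?mem_head // IH // => y ys.
by rewrite fM // inE ys orbT.
Qed.

(* [tswap x] is the transposition (0 x) of nat; the letter i.+1 of a word stands for [sigma i]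
   (see [sigma_val]). *)
Definition tswap (x y : nat) : nat := if y == 0 then x else if y == x then 0 else y.

Definition word_act (w : seq nat) (y : nat) : nat := foldl (fun y x => tswap x y) y w.

Definition acts_trivially (w : seq nat) : bool :=
  all (fun y => word_act w y == y) (0 :: w).

Section Relabel.

Variables (g : nat -> nat) (P : {pred nat}).
Hypotheses (g0 : g 0 = 0) (P0 : 0 \in P) (g_inj : {in P &, injective g}).

Lemma tswap_relabel x y : x \in P -> y \in P ->
  g (tswap x y) = tswap (g x) (g y) /\ tswap x y \in P.
Proof.
rewrite /tswap => Px Py; case: (eqVneq y 0) => [->|y0]; first by rewrite g0 eqxx.
have gy0 : g y != 0 by rewrite -g0; apply: contra_neq y0 => /g_inj->.
rewrite (negbTE gy0) (inj_in_eq g_inj) //.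
by case: eqP.
Qed.

Lemma word_act_relabel w y : all [in P] w -> y \in P ->
  g (word_act w y) = word_act (map g w) (g y) /\ word_act w y \in P.
Proof.
elim: w y => [|x w IH] y //= /andP[Px Pw] Py.
have [<- Pxy] := tswap_relabel Px Py.
exact: IH.
Qed.

End Relabel.

Lemma acts_trivially_relabel (g : nat -> nat) w :
  g 0 = 0 -> {in 0 :: w &, injective g} -> acts_trivially (map g w) = acts_trivially w.
Proof.
move=> g0 g_inj; have w0 : 0 \in 0 :: w := mem_head 0 w.
have ww0 : all [in 0 :: w] w by apply/allP => x xw; rewrite inE xw orbT.
rewrite /acts_trivially -{1}g0 -map_cons all_map; apply: eq_in_all => y w0y /=.
have [<- w0_act] := word_act_relabel g0 w0 g_inj ww0 w0y.
exact: (inj_in_eq g_inj w0_act w0y).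
Qed.

Lemma cycle_neq_map (T T' : eqType) (f : T -> T') (w : seq T) : {in w &, injective f} ->
  path.cycle [rel x y : T' | x != y] (map f w) = path.cycle [rel x y | x != y] w.
Proof.
move=> f_inj; rewrite cycle_map; apply: (eq_in_cycle (P := mem w)); last exact: allss.
by move=> x y xw yw; rewrite /= (inj_in_eq f_inj).
Qed.

Definition canon (w : seq nat) : seq nat := [seq (index x w).+1 | x <- w].

Lemma canonK w : map (nth 0 (0 :: w)) (canon w) = w.
Proof. by rewrite -map_comp map_id_in // => x xw /=; rewrite nth_index. Qed.

Lemma canon_letter_inj w : 0 \notin w -> {in 0 :: canon w &, injective (nth 0 (0 :: w))}.
Proof.
move=> w0; apply: (can_in_inj (g := fun x => if x == 0 then 0 else (index x w).+1)).
move=> y; rewrite inE => /predU1P[->|/mapP[x xw ->]] //=.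
by rewrite nth_index //; case: eqP xw w0 => [->|] // ->.
Qed.

Fixpoint bounded_words n : seq (seq nat) :=
  if n is n'.+1 then [seq rcons e v | e <- bounded_words n', v <- iota 1 n] else [:: [::]].

Lemma mem_bounded_words e :
  (forall l, l < size e -> 0 < nth 0 e l <= l.+1) -> e \in bounded_words (size e).
Proof.
elim/last_ind: e => [|e v IH] // e_bnd; rewrite size_rcons.
apply: allpairs_f.
  by apply: IH => l le; have := e_bnd l; rewrite size_rcons nth_rcons le ltnS; apply; apply: ltnW.
have := e_bnd (size e); rewrite size_rcons nth_rcons ltnn eqxx mem_iota => /(_ (ltnSn _)).
by rewrite add1n ltnS.
Qed.

Lemma canon_bounded w : canon w \in bounded_words (size w).
Proof.
rewrite -(size_map (fun x => (index x w).+1)); apply: mem_bounded_words => l.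
by rewrite size_map => lw; rewrite (nth_map 0) //= ltnS index_nth.
Qed.

Definition balances (u v : seq nat) (s t i j k : nat) : bool :=
  perm_eq (flatten (nseq s u) ++ nseq t.*2 k) (flatten (nseq s v) ++ nseq t i ++ nseq t j).

Lemma sumn_flatten_nseq (b : nat -> nat) s u :
  sumn (map b (flatten (nseq s u))) = s * sumn (map b u).
Proof. by elim: s => //= s IH; rewrite map_cat sumn_cat IH mulSn. Qed.

Lemma balances_progression (b : nat -> nat) u v s t i j k : 0 < t ->
  balances u v s t i j k -> sumn (map b u) = sumn (map b v) -> b i + b j = (b k).*2.
Proof.
move=> t_gt0 /(perm_map b)/perm_sumn; rewrite !map_cat !sumn_cat !sumn_flatten_nseq.
rewrite !map_nseq !sumn_nseq => + uv; rewrite uv => /addnI.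
by rewrite -doubleMr doubleMl -mulnDl => /eqP; rewrite eqn_pmul2r // => /eqP ->.
Qed.

(* The ranges s <= 2 and t <= 3 suffice for all words of length at most 8. *)
Definition progression_witness (w : seq nat) : bool :=
  let bal s t i j k :=
    balances (evens w) (odds w) s t i j k || balances (odds w) (evens w) s t i j k in
  has (fun s => has (fun t => has (fun i => has (fun j => has (fun k =>
    (i != k) && bal s t i j k) w) w) w) (iota 1 3)) (iota 1 2).

Lemma progression_of_witness (b : nat -> nat) w : progression_witness w ->
  sumn (map b (evens w)) = sumn (map b (odds w)) ->
  exists i j k, [/\ i \in w, j \in w, k \in w, i != k & b i + b j = (b k).*2].
Proof.
move=> /hasP[s _ /hasP[t]]; rewrite mem_iota => /andP[t_gt0 _].
move=> /hasP[i iw /hasP[j jw /hasP[k kw /andP[ik bal]]]] eo.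
exists i, j, k; split=> //.
by case/orP: bal => /balances_progression; apply.
Qed.

(* [if] rather than [==>]: the VM evaluates both arguments of [implb]. *)
Lemma bounded_words_witness :
  all (fun n => all (fun e =>
         if acts_trivially e && path.cycle [rel x y | x != y] e then progression_witness e
         else true) (bounded_words n)) [:: 2; 4; 6; 8].
Proof. by vm_compute. Qed.

Lemma short_relator_progression (b : nat -> nat) w :
  size w \in [:: 2; 4; 6; 8] -> 0 \notin w -> acts_trivially w ->
  path.cycle [rel x y | x != y] w -> sumn (map b (evens w)) = sumn (map b (odds w)) ->
  exists i j k, [/\ i \in w, j \in w, k \in w, i != k & b i + b j = (b k).*2].
Proof.
move=> size_w w0 w_triv w_cyc w_bal.
pose g := nth 0 (0 :: w); have g_inj := canon_letter_inj w0.
have e_triv : acts_trivially (canon w).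
  by rewrite -(acts_trivially_relabel (g := g)) ?canonK.
have e_cyc : path.cycle [rel x y | x != y] (canon w).
  rewrite -(cycle_neq_map (f := g)) ?canonK // => x y xe ye.
  by apply: g_inj; rewrite inE ?xe ?ye orbT.
have e_wit : progression_witness (canon w).
  have /allP/(_ _ size_w)/allP/(_ _ (canon_bounded w)) := bounded_words_witness.
  by rewrite e_triv e_cyc.
have e_bal : sumn (map (b \o g) (evens (canon w))) = sumn (map (b \o g) (odds (canon w))).
  by have [me mo] := map_evens_odds g (canon w); rewrite !(map_comp b g) me mo canonK.
have [i [j [k [ie je ke ik bk]]]] := progression_of_witness e_wit e_bal.
have gw x : x \in canon w -> g x \in w by move=> xe; have := map_f g xe; rewrite canonK.
exists (g i), (g j), (g k); split; rewrite ?gw //.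
by rewrite /g (inj_in_eq g_inj) // inE ?ie ?ke orbT.
Qed.

Lemma Zp_alt_prod m n (c : 'I_n -> nat) :
  (\prod_(l < n) (if odd l then (inZp (c l) : 'Z_m)^-1 else inZp (c l)))%g =
  ((\sum_(l < n | ~~ odd l) c l)%:R - (\sum_(l < n | odd l) c l)%:R : 'Z_m)%R.
Proof.
rewrite (big_morph id (id1 := 0%R) (op1 := +%R) (fun _ _ => erefl) erefl).
rewrite (bigID (fun l : 'I_n => odd l)) [RHS]addrC !natr_sum -sumrN.
by congr (_ + _)%R; apply: eq_bigr => l /=; case: (odd l) => // _; rewrite Zp_nat.
Qed.

Lemma next_enum_ord n (i : 'I_n) : next (enum 'I_n) i = ordS i.
Proof.
rewrite next_nth mem_enum inE; case def_e: (enum 'I_n) => [|y p].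
  by have := mem_enum 'I_n i; rewrite def_e.
have val_y : val y = 0.
  by have := @nth_enum_ord n y 0 (leq_ltn_trans (leq0n i) (ltn_ord i)); rewrite def_e.
rewrite -[p]/(behead (y :: p)) -def_e nth_behead index_enum_ord; apply: val_inj => /=.
case: (ltngtP i.+1 n) (ltn_ord i) => [lt_i1n|//|eq_i1n] _.
  by rewrite nth_enum_ord ?modn_small.
by rewrite nth_default ?size_enum_ord ?eq_i1n // modnn.
Qed.

Lemma sigma_val d (i : 'I_d) (y : 'I_d.+1) : val (sigma i y) = tswap i.+1 y.
Proof.
rewrite /sigma permE /= /tswap; case: (eqVneq y ord0) => [->|y0] //=.
have /negbTE-> : val y != 0 by apply: contra_neq y0 => y0; apply: val_inj.
case: (eqVneq y (lift ord0 i)) => [->|yi] /=; first by rewrite eqxx.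
by rewrite ifF //; apply: contra_neqF yi => /eqP yi; apply: val_inj.
Qed.

Lemma prod_sigma_val d (s : seq 'I_d) (y : 'I_d.+1) :
  val ((\prod_(i <- s) sigma i)%g y) = word_act [seq (val i).+1 | i <- s] y.
Proof.
elim: s y => [|i s IH] y; first by rewrite big_nil perm1.
by rewrite big_cons permM IH /= sigma_val.
Qed.

Lemma prod_fst (gT hT : finGroupType) I r (P : pred I) (F : I -> gT * hT) :
  ((\prod_(i <- r | P i) F i).1 = \prod_(i <- r | P i) (F i).1)%g.
Proof. by elim/big_rec2: _ => //= i x y _ ->. Qed.

Lemma prod_snd (gT hT : finGroupType) I r (P : pred I) (F : I -> gT * hT) :
  ((\prod_(i <- r | P i) F i).2 = \prod_(i <- r | P i) (F i).2)%g.
Proof. by elim/big_rec2: _ => //= i x y _ ->. Qed.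

Lemma relator_components d m (a : nat -> nat) n (idx : 'I_n -> 'I_d) :
  (\prod_(l < n) (if odd l then (gamma m a (idx l))^-1 else gamma m a (idx l)))%g = 1%g ->
  (\prod_(l < n) sigma (idx l))%g = 1%g /\
  (\prod_(l < n) (if odd l then (inZp (a (idx l).+1) : 'Z_m)^-1 else inZp (a (idx l).+1)))%g
    = 1%g.
Proof.
move=> rel1; split.
  have := congr1 fst rel1; rewrite prod_fst => /(etrans _); apply; apply: eq_bigr => l _.
  by case: (odd l); rewrite //= tpermV.
have := congr1 snd rel1; rewrite prod_snd => /(etrans _); apply; apply: eq_bigr => l _.
by case: (odd l).
Qed.

Definition index_word n d (idx : 'I_n -> 'I_d) : seq nat := [seq (idx l).+1 | l <- enum 'I_n].

Section IndexWord.

Variables (n d : nat) (idx : 'I_n -> 'I_d).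

Lemma size_index_word : size (index_word idx) = n.
Proof. by rewrite size_map size_enum_ord. Qed.

Lemma nth_index_word (l : 'I_n) : nth 0 (index_word idx) l = (idx l).+1.
Proof. by rewrite (nth_map l) ?size_enum_ord // nth_ord_enum. Qed.

Lemma index_word_letter x : x \in index_word idx -> 0 < x <= d.
Proof. by case/mapP => l _ ->; rewrite ltn_ord. Qed.

Lemma index_word_cycle : (forall l, idx l != idx (ordS l)) ->
  path.cycle [rel x y | x != y] (index_word idx).
Proof.
move=> adj; rewrite cycle_map; apply: cycle_from_next => [|l _]; first exact: enum_uniq.
by rewrite next_enum_ord /= eqSS (inj_eq val_inj); apply: adj.
Qed.

Lemma index_word_acts_trivially :
  (\prod_(l < n) sigma (idx l))%g = 1%g -> acts_trivially (index_word idx).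
Proof.
rewrite [index_enum _]unlock -enumT => prod1; apply/allP => y y_in.
have y_lt : y < d.+1.
  by case/predU1P: y_in => [->|/index_word_letter]; lia.
have := prod_sigma_val (map idx (enum 'I_n)) (Ordinal y_lt).
by rewrite big_map prod1 perm1 -map_comp => <-.
Qed.

Lemma index_word_balance m (c : nat -> nat) : 1 < m ->
  (\prod_(l < n) (if odd l then (inZp (c (idx l).+1) : 'Z_m)^-1 else inZp (c (idx l).+1)))%g
    = 1%g ->
  sumn (map c (evens (index_word idx))) = sumn (map c (odds (index_word idx))) %[mod m].
Proof.
move=> m_gt1; rewrite Zp_alt_prod => /eqP; rewrite subr_eq0 => /eqP.
move/(congr1 (@nat_of_ord _)); rewrite !val_Zp_nat // => sums_eq.
have [<- <-] := sum_evens_odds c size_index_word.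
under eq_bigr do rewrite nth_index_word; under [in RHS]eq_bigr do rewrite nth_index_word.
exact: sums_eq.
Qed.

Lemma index_word_balanced m (c : nat -> nat) M : 1 < m -> n <= 8 -> 4 * M < m ->
  (forall x, 0 < x <= d -> c x <= M) ->
  (\prod_(l < n) (if odd l then (inZp (c (idx l).+1) : 'Z_m)^-1 else inZp (c (idx l).+1)))%g
    = 1%g ->
  sumn (map c (evens (index_word idx))) = sumn (map c (odds (index_word idx))).
Proof.
move=> m_gt1 n_le8 M_lt_m c_le /(index_word_balance m_gt1).
have sum_lt s : subseq s (index_word idx) -> size s <= 4 -> sumn (map c s) < m.
  move=> sw s_le4; apply: leq_ltn_trans M_lt_m; apply: leq_trans (leq_mul s_le4 (leqnn M)).
  by apply: sumn_map_le => x /(mem_subseq sw)/index_word_letter; apply: c_le.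
have [[se so] [ze zo]] := (subseq_evens_odds (index_word idx), size_evens_odds (index_word idx)).
rewrite !modn_small ?sum_lt // ?ze ?zo size_index_word.
  exact: (half_leq n_le8).
exact: (uphalf_leq n_le8).
Qed.

End IndexWord.

Lemma increasing_le_last (a : nat -> nat) d : (forall i, 1 <= i < d -> a i < a i.+1) ->
  {in [pred x | 0 < x <= d], forall x, a x <= a d}.
Proof.
move=> a_incr x; rewrite inE => /andP[x_gt0 x_le_d].
apply: (homo_leq_in (D := [pred x | 0 < x <= d]) leqnn (fun _ _ _ => @leq_trans _ _ _));
  rewrite ?inE; try lia.
- by move=> i j iD jD k; rewrite !inE in iD jD *; lia.
- by move=> i; rewrite !inE => iD i1D; apply/ltnW/a_incr; lia.
Qed.

Theorem proposition5p6 (d : nat) (a : nat -> nat) (m : nat) :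
  (1 <= d)%N ->
  (0 < a 1)%N ->
  (forall i, 1 <= i < d -> a i < a i.+1)%N ->
  progression_free d a ->
  (4 * a d < m)%N ->
  condG (@gamma d m a) 4.
Proof.
move=> d_gt0 a1_gt0 a_incr a_pf a_lt_m q /andP[q_gt0 q_le4] idx rel1.
case: (pickP (fun l => idx l == idx (ordS l))) => [l /eqP|no_adj]; first by exists l.
have [perm1 zp1] := relator_components rel1; set w := index_word idx.
have a_le x : 0 < x <= d -> a x <= a d := increasing_le_last a_incr (x := x).
have m_gt1 : 1 < m by have := a_le 1; lia.
have bal : sumn (map a (evens w)) = sumn (map a (odds w)).
  by apply: index_word_balanced a_lt_m a_le zp1 => //; lia.
have size_w : size w \in [:: 2; 4; 6; 8] by rewrite size_index_word !inE; lia.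
have w0 : 0 \notin w by apply/negP => /index_word_letter.
have [i [j [k [iw jw kw ik aijk]]]] := short_relator_progression size_w w0
  (index_word_acts_trivially perm1) (index_word_cycle (fun l => negbT (no_adj l))) bal.
have [ij jk] : i = j /\ j = k.
  by apply: a_pf; rewrite ?mul2n ?(index_word_letter iw) ?(index_word_letter jw) ?(index_word_letter kw).
by move: ik; rewrite ij jk eqxx.
Qed.
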